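(* Let $n>1$ and $k\ge1$. Let $\mathcal{B}=\{\mathcal{B}^{(0)},\mathcal{B}^{(1)},\mathcal{B}^{(2)}\}$ be a special $n$-Brinkhuis $k$-triple, and suppose some word of $\mathcal{B}^{(0)}$ begins with the letters $01$. Then: <ul> <li>$n\ge 7$;</li> <li>every word in $\mathcal{B}^{(0)}$ begins with $012$ and ends with $210$.</li> </ul>
   Context: Let $\Sigma=\{0,1,2\}$. A word over $\Sigma$ is square-free if it cannot be written as $xyyz$ with $y$ nonempty. $\mathcal{A}(n)$ is the set of square-free words of length $n$. For a word $w$, $\bar w$ denotes its reversal. $\tau$ is the letter permutation $0\mapsto1$, $1\mapsto2$, $2\mapsto0$, applied letterwise to words and elementwise to sets of words. An $n$-Brinkhuis $(k_0,k_1,k_2)$-triple consists of sets $\mathcal{B}^{(i)}\subset\mathcal{A}(n)$, $i\in\{0,1,2\}$, where $\mathcal{B}^{(i)}$ has $k_i\ge1$ distinct words. The defining condition: for every square-free word $ii'i''\in\mathcal{A}(3)$ and all $u\in\mathcal{B}^{(i)}$, $v\in\mathcal{B}^{(i')}$, $x\in\mathcal{B}^{(i'')}$, the concatenation $uvx$ is square-free. A special $n$-Brinkhuis $k$-triple is an $n$-Brinkhuis $(k,k,k)$-triple satisfying two further conditions: <ul> <li>$\mathcal{B}^{(1)}=\tau(\mathcal{B}^{(0)})$ and $\mathcal{B}^{(2)}=\tau^2(\mathcal{B}^{(0)})$;</li> <li>$w\in\mathcal{B}^{(0)}$ implies $\bar w\in\mathcal{B}^{(0)}$.</li> </ul> 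*)

From mathcomp Require Import all_boot.
Set Implicit Arguments. Unset Strict Implicit. Unset Printing Implicit Defensive.

Definition letter := 'I_3.
Definition L0 : letter := @Ordinal 3 0 isT.
Definition L1 : letter := @Ordinal 3 1 isT.
Definition L2 : letter := @Ordinal 3 2 isT.

Definition square_free (w : seq letter) : Prop :=
  ~ exists x y z : seq letter, y <> [::] /\ w = x ++ y ++ y ++ z.

Definition tau (a : letter) : letter := inord ((nat_of_ord a).+1 %% 3).

Definition tau_set n (B : {set n.-tuple letter}) : {set n.-tuple letter} :=
  [set map_tuple tau w | w in B].

Definition brinkhuis_triple n (B : 'I_3 -> {set n.-tuple letter}) (k : 'I_3 -> nat) : Prop :=
  (forall i, #|B i| = k i /\ 1 <= k i) /\
  (forall i (w : n.-tuple letter), w \in B i -> square_free w) /\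
  (forall i i' i'' : 'I_3, square_free [:: i; i'; i''] ->
     forall u v x : n.-tuple letter,
       u \in B i -> v \in B i' -> x \in B i'' ->
       square_free (tval u ++ tval v ++ tval x)).

Definition special_brinkhuis_triple n (B : 'I_3 -> {set n.-tuple letter}) (k : nat) : Prop :=
  brinkhuis_triple B (fun _ => k) /\
  B L1 = tau_set (B L0) /\ B L2 = tau_set (tau_set (B L0)) /\
  (forall w : n.-tuple letter, w \in B L0 -> [tuple of rev w] \in B L0).

From mathcomp Require Import all_boot zify.

(* Let r be the reversal of a word of B^(0) beginning with 01; r lies in
   B^(0) and ends with 10, so tau(r) and tau^2(r) end with 21 and 02.  For
   every u in B^(0) the words tau(r) u tau(r) and tau^2(r) u tau^2(r) are
   square-free, and the junctions 21.u and 02.u force u to begin with 01;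
   the junction 21.u then forces its third letter to be 2.  Closure of B^(0)
   under reversal turns these prefixes into the suffix 210.  A word of length
   at most 6 with prefix 012 and suffix 210 is either 012210, which contains
   the square 22, or 01210, for which u tau^2(u) u contains (1020)^2. *)

Lemma tauE : (tau L0 = L1) * (tau L1 = L2) * (tau L2 = L0).
Proof. by do !split; apply: val_inj; rewrite /= inordK. Qed.

Lemma letterP (a : letter) : [\/ a = L0, a = L1 | a = L2].
Proof.
case: a => [[|[|[|//]]] ?]; [apply: Or31 | apply: Or32 | apply: Or33];
  exact: val_inj.
Qed.

Definition has_square (w : seq letter) : bool :=
  has (fun y => infix (y ++ y) w)
      [seq take l (drop i w) | i <- iota 0 (size w), l <- iota 1 (size w)].

Lemma square_freeP (w : seq letter) : reflect (square_free w) (~~ has_square w).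
Proof.
apply: (iffP hasPn) => [no_square [x [y [z [y_nonnil w_def]]]] | w_sf y].
  have y_gt0 : 0 < size y by rewrite lt0n size_eq0; apply/eqP.
  have size_w : size w = size x + size y + size y + size z.
    by rewrite w_def !size_cat; lia.
  have: y \in [seq take l (drop i w) | i <- iota 0 (size w), l <- iota 1 (size w)].
    apply/allpairsPdep; exists (size x), (size y); rewrite !mem_iota.
    by split; [lia | lia | rewrite w_def drop_size_cat // take_size_cat].
  move=> /no_square /negP; apply; apply/infixP; exists x, z.
  by rewrite w_def -catA.
case/allpairsPdep=> i [l [+ + ->]]; rewrite !mem_iota => i_lt l_gt0.
apply/negP => /infixP [x [z w_def]]; apply: w_sf; exists x, (take l (drop i w)), z.
split; last by rewrite {1}w_def -catA.
by move=> /(congr1 size) /=; rewrite size_take_min size_drop; lia.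
Qed.

Lemma square_free_infix (v w : seq letter) :
  infix v w -> square_free w -> square_free v.
Proof.
move=> /infixP [s [s' ->]] w_sf [x [y [z [y_nonnil v_def]]]]; apply: w_sf.
by exists (s ++ x), y, (z ++ s'); split=> //; rewrite v_def -!catA.
Qed.

Lemma suffix_map {T U : eqType} (f : T -> U) {s x : seq T} :
  suffix s x -> suffix (map f s) (map f x).
Proof. by move=> /suffixP [x' ->]; rewrite map_cat suffix_suffix. Qed.

Lemma square_free_junction {x y z s p : seq letter} :
  suffix s x -> prefix p y -> square_free (x ++ y ++ z) -> square_free (s ++ p).
Proof.
move=> /suffixP [x' ->] /prefixP [y' ->]; apply: square_free_infix.
by apply/infixP; exists x', (y' ++ z); rewrite -!catA.
Qed.

Lemma junction_first_letters {f s : letter} :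
  square_free [:: L2; L1; f; s] -> square_free [:: L0; L2; f; s] -> f = L0 /\ s = L1.
Proof.
move=> /square_freeP + /square_freeP.
by case: (letterP f) => ->; case: (letterP s) => ->.
Qed.

Lemma junction_third_letter {c : letter} : square_free [:: L2; L1; L0; L1; c] -> c = L2.
Proof. by move=> /square_freeP; case: (letterP c) => ->. Qed.

Lemma size_012_210_ge7 (u : seq letter) :
  prefix [:: L0; L1; L2] u -> suffix [:: L2; L1; L0] u ->
  square_free u -> square_free (u ++ map tau (map tau u) ++ u) -> 7 <= size u.
Proof.
case/prefixP=> a ->; rewrite size_cat /= => + /square_freeP + /square_freeP.
(* [tau] goes through [inord], which does not reduce: rewrite with [tauE]. *)
case: a => [|x [|y [|z [|? ?]]]] //.
- by case: (letterP x) => ->; rewrite /= ?tauE.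
- by case: (letterP x) => ->; case: (letterP y) => ->; rewrite /= ?tauE.
- by case: (letterP x) => ->; case: (letterP y) => ->; case: (letterP z) => ->;
    rewrite /= ?tauE.
Qed.

Section SpecialTriple.

Context {n k : nat} {B : 'I_3 -> {set n.-tuple letter}}.
Hypothesis B_special : special_brinkhuis_triple B k.

Lemma B0_square_free {u : n.-tuple letter} : u \in B L0 -> square_free u.
Proof. by case: B_special => [[_ [B_sf _]] _]; apply: B_sf. Qed.

Lemma B0_rev {u : n.-tuple letter} : u \in B L0 -> [tuple of rev u] \in B L0.
Proof. by case: B_special => _ [_ [_ B0_rev_closed]]; apply: B0_rev_closed. Qed.

Lemma tau_B0 {u : n.-tuple letter} : u \in B L0 -> map_tuple tau u \in B L1.
Proof. by case: B_special => _ [-> _] u_in; apply: imset_f. Qed.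

Lemma tau2_B0 {u : n.-tuple letter} :
  u \in B L0 -> map_tuple tau (map_tuple tau u) \in B L2.
Proof. by case: B_special => _ [_ [-> _]] u_in; do 2!apply: imset_f. Qed.

Lemma B_cat3_square_free {i j l : letter} {u v x : n.-tuple letter} :
  square_free [:: i; j; l] -> u \in B i -> v \in B j -> x \in B l ->
  square_free (u ++ v ++ x).
Proof. by case: B_special => [[_ [_ B_cat3]] _] ijl_sf; apply: B_cat3. Qed.

Lemma tau_B0_sandwich {u v : n.-tuple letter} : u \in B L0 -> v \in B L0 ->
  square_free (map tau u ++ v ++ map tau u).
Proof.
move=> u_in v_in; apply: (B_cat3_square_free _ (tau_B0 u_in) v_in (tau_B0 u_in)).
exact/square_freeP.
Qed.

Lemma tau2_B0_sandwich {u v : n.-tuple letter} : u \in B L0 -> v \in B L0 ->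
  square_free (map tau (map tau u) ++ v ++ map tau (map tau u)).
Proof.
move=> u_in v_in; apply: (B_cat3_square_free _ (tau2_B0 u_in) v_in (tau2_B0 u_in)).
exact/square_freeP.
Qed.

Lemma B0_tau2_sandwich {u v : n.-tuple letter} : u \in B L0 -> v \in B L0 ->
  square_free (u ++ map tau (map tau v) ++ u).
Proof.
move=> u_in v_in; apply: (B_cat3_square_free _ u_in (tau2_B0 v_in) u_in).
exact/square_freeP.
Qed.

Lemma B0_suffix_rev {p : seq letter} {u : n.-tuple letter} :
  (forall v : n.-tuple letter, v \in B L0 -> prefix p v) ->
  u \in B L0 -> suffix (rev p) u.
Proof. by move=> B0_prefix /B0_rev/B0_prefix; rewrite suffix_revLR. Qed.

Lemma B0_prefix01 {r u : n.-tuple letter} : 1 < n ->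
  r \in B L0 -> suffix [:: L1; L0] r -> u \in B L0 -> prefix [:: L0; L1] u.
Proof.
move=> n_gt1 r_in r_suffix u_in.
have tau_r_suffix := suffix_map tau r_suffix.
have tau2_r_suffix := suffix_map tau tau_r_suffix.
rewrite /= ?tauE in tau_r_suffix tau2_r_suffix.
have: 1 < size u by rewrite size_tuple.
case u_def: (tval u) => [|f [|s t]] // _.
have u_prefix : prefix [:: f; s] u by rewrite u_def prefix_prefix.
have sf21 := square_free_junction tau_r_suffix u_prefix (tau_B0_sandwich r_in u_in).
have sf02 := square_free_junction tau2_r_suffix u_prefix (tau2_B0_sandwich r_in u_in).
by have [-> ->] := junction_first_letters sf21 sf02; apply: prefix_prefix.
Qed.

Lemma B0_prefix012 {u : n.-tuple letter} :
  (forall v : n.-tuple letter, v \in B L0 -> prefix [:: L0; L1] v) ->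
  u \in B L0 -> prefix [:: L0; L1; L2] u.
Proof.
move=> B0_prefix u_in.
have u_suffix := B0_suffix_rev B0_prefix u_in.
have tau_u_suffix := suffix_map tau u_suffix.
rewrite /= ?tauE in tau_u_suffix.
case/prefixP: (B0_prefix u u_in) => [[|c t] u_def].
  by move: u_suffix; rewrite u_def.
have u_prefix : prefix [:: L0; L1; c] u by rewrite u_def prefix_prefix.
have := square_free_junction tau_u_suffix u_prefix (tau_B0_sandwich u_in u_in).
by rewrite u_def => /junction_third_letter ->; apply: prefix_prefix.
Qed.

Lemma B0_size_ge7 {u : n.-tuple letter} :
  (forall v : n.-tuple letter, v \in B L0 -> prefix [:: L0; L1; L2] v) ->
  u \in B L0 -> 7 <= n.
Proof.
move=> B0_prefix u_in; rewrite -(size_tuple u).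
apply: size_012_210_ge7 (B0_prefix u u_in) (B0_suffix_rev B0_prefix u_in) _ _.
  exact: (B0_square_free u_in).
exact: (B0_tau2_sandwich u_in u_in).
Qed.

End SpecialTriple.

Theorem lemma3 (n k : nat) (B : 'I_3 -> {set n.-tuple letter}) :
  1 < n -> 1 <= k ->
  special_brinkhuis_triple B k ->
  (exists w : n.-tuple letter, w \in B L0 /\ prefix [:: L0; L1] (tval w)) ->
  7 <= n /\
  (forall w : n.-tuple letter, w \in B L0 ->
     prefix [:: L0; L1; L2] (tval w) /\ suffix [:: L2; L1; L0] (tval w)).
Proof.
move=> n_gt1 _ B_special [w [w_in w_prefix]].
have rw_suffix : suffix [:: L1; L0] [tuple of rev w].
  by rewrite -[X in suffix X _]/(rev [:: L0; L1]) suffix_rev.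
have prefix01 u : u \in B L0 -> prefix [:: L0; L1] u.
  exact: (B0_prefix01 B_special n_gt1 (B0_rev B_special w_in) rw_suffix).
have prefix012 u : u \in B L0 -> prefix [:: L0; L1; L2] u.
  exact: (B0_prefix012 B_special prefix01).
split; first exact: (B0_size_ge7 B_special prefix012 w_in).
move=> u u_in; split; first exact: prefix012.
exact: (B0_suffix_rev B_special prefix012 u_in).
Qed.
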